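(* Let $I\subseteq \mathrm{Int}(\mathbb{Z})$ be a principal ideal with $I\cap\mathbb{Z}=n\mathbb{Z}$ for some integer $n\neq 0$. Then $I=n\,\mathrm{Int}(\mathbb{Z})$. In particular $n\,\mathrm{Int}(\mathbb{Z})\cap\mathbb{Z}=n\mathbb{Z}$ for every nonzero integer $n$. Moreover, for nonzero integers $n_1,n_2$ we have $n_1\mathrm{Int}(\mathbb{Z})=n_2\mathrm{Int}(\mathbb{Z})$ if and only if $n_1=\pm n_2$.
   Context: $\mathrm{Int}(\mathbb{Z})=\{f\in\mathbb{Q}[X] : f(\mathbb{Z})\subseteq\mathbb{Z}\}$ is the ring of integer-valued polynomials. An ideal $I$ of $\mathrm{Int}(\mathbb{Z})$ is called unitary if $I\cap\mathbb{Z}\neq\{0\}$. *)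

From HB Require Import structures.
From mathcomp Require Import all_boot all_order all_algebra.
Set Implicit Arguments. Unset Strict Implicit. Unset Printing Implicit Defensive.
Import Order.TTheory GRing.Theory Num.Theory.
Local Open Scope ring_scope.

Definition intValued (f : {poly rat}) : Prop :=
  forall z : int, f.[z%:~R] \is a Num.int.

Definition inPrincipal (g f : {poly rat}) : Prop :=
  exists2 h, intValued h & f = g * h.

Definition cpoly (n : int) : {poly rat} := (n%:~R)%:P.

From HB Require Import structures.
From mathcomp Require Import all_boot all_order all_algebra.
Import Order.TTheory GRing.Theory Num.Theory.
Local Open Scope ring_scope.

(* The whole argument rests on degrees.  If g * h = n with n a nonzero
   constant, then g and h are nonzero constants; when g is integer-valued its
   constant value is an integer k.  Hence a principal ideal containing a
   nonzero integer is generated by a nonzero integer k.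
   For integer generators everything reduces to arithmetic: m lies in
   n * Int(Z) iff m / n is an integer iff n divides m, and n * Int(Z) only
   depends on n up to sign.  Comparing the integers of the two ideals then
   shows k = +-n in the first claim, and n1 = +-n2 in the third. *)

Lemma intValued_polyC (c : rat) : intValued c%:P <-> c \is a Num.int.
Proof.
split; first by move=> /(_ 0); rewrite hornerC.
by move=> c_int z; rewrite hornerC.
Qed.

Lemma intValued1 : intValued 1.
Proof. by apply/intValued_polyC; rewrite rpred1. Qed.

Lemma intValuedN (h : {poly rat}) : intValued h -> intValued (- h).
Proof. by move=> h_iv z; rewrite hornerN rpredN. Qed.

Lemma inPrincipal_refl (g : {poly rat}) : inPrincipal g g.
Proof. by exists 1; [exact: intValued1 | rewrite mulr1]. Qed.

Lemma dvdz_anti (a b : int) : (a %| b)%Z -> (b %| a)%Z -> a = b \/ a = - b.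
Proof.
rewrite !dvdzE => dvd_ab dvd_ba.
have /eqP abs_eq : `|a|%N == `|b|%N by rewrite eqn_dvd dvd_ab dvd_ba.
have /eqP : `|a| = `|b| :> int by rewrite -!abszE abs_eq.
by rewrite eqr_norm2 => /orP [] /eqP; [left | right].
Qed.

Lemma ratz_div_int (n m : int) : n != 0 ->
  ((m%:~R / n%:~R : rat) \is a Num.int) <-> (n %| m)%Z.
Proof.
move=> n_nz; have nr_nz : (n%:~R : rat) != 0 by rewrite intr_eq0.
split.
- move=> /intrP [k Ek]; apply/dvdzP; exists k.
  by apply/eqP; rewrite -(eqr_int rat) intrM -Ek mulfVK.
- by move=> /dvdzP [k ->]; rewrite intrM mulfK // rpred_int.
Qed.

Lemma cpoly_cofactor (n m : int) (h : {poly rat}) : n != 0 ->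
  cpoly m = cpoly n * h -> h = (m%:~R / n%:~R)%:P.
Proof.
move=> n_nz; rewrite /cpoly mul_polyC => Em.
have nr_nz : (n%:~R : rat) != 0 by rewrite intr_eq0.
have -> : h = (n%:~R)^-1 *: (n%:~R *: h) by rewrite scalerA mulVf // scale1r.
by rewrite -Em -mul_polyC -polyCM mulrC.
Qed.

Lemma inPrincipal_cpoly (n m : int) : n != 0 ->
  inPrincipal (cpoly n) (cpoly m) <-> (n %| m)%Z.
Proof.
move=> n_nz; split.
- move=> [h h_iv Em]; apply/(ratz_div_int _ m n_nz)/intValued_polyC.
  by rewrite -(cpoly_cofactor _ _ _ n_nz Em).
- move=> dvd_nm; exists (m%:~R / n%:~R)%:P.
    exact/intValued_polyC/(ratz_div_int _ m n_nz).
  by rewrite /cpoly -polyCM mulrC divfK // intr_eq0.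
Qed.

Lemma inPrincipal_cpolyN (a : int) (f : {poly rat}) :
  inPrincipal (cpoly a) f -> inPrincipal (cpoly (- a)) f.
Proof.
move=> [h h_iv ->]; exists (- h); first exact: intValuedN.
by rewrite /cpoly mulrNz polyCN mulrNN.
Qed.

Lemma inPrincipal_cpoly_sign (a b : int) (f : {poly rat}) : a = b \/ a = - b ->
  inPrincipal (cpoly a) f <-> inPrincipal (cpoly b) f.
Proof.
move=> [-> | ->]; first by [].
by split=> [/inPrincipal_cpolyN | ]; [rewrite opprK | exact: inPrincipal_cpolyN].
Qed.

(* An integer-valued polynomial dividing a nonzero integer inside Int(Z) is
   itself a nonzero integer: by degrees, both factors are constants. *)
Lemma unitary_generator (g : {poly rat}) (n : int) : intValued g -> n != 0 ->
  inPrincipal g (cpoly n) -> exists2 k : int, k != 0 & g = cpoly k.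
Proof.
move=> g_iv n_nz [h _ En].
have size_n : size (cpoly n) = 1%N by rewrite /cpoly size_polyC intr_eq0 n_nz.
have size_g : size g = 1%N.
  by apply/eqP; move: size_n; rewrite En => /eqP; rewrite size_mul_eq1 => /andP [].
have Eg : g = (g`_0)%:P by apply: size1_polyC; rewrite size_g.
have /intrP [k Ek] : g`_0 \is a Num.int by apply/intValued_polyC; rewrite -Eg.
exists k; last by rewrite Eg Ek.
by apply: contra_eqN size_g => /eqP k0; rewrite Eg Ek k0 size_poly0.
Qed.

Theorem mainTheorem1 :
  (forall (g : {poly rat}) (n : int), intValued g -> n != 0 ->
     (forall m : int, inPrincipal g (cpoly m) <-> (n %| m)%Z) ->
     forall f : {poly rat}, inPrincipal g f <-> inPrincipal (cpoly n) f)
  /\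
  (forall n : int, n != 0 ->
     forall m : int, inPrincipal (cpoly n) (cpoly m) <-> (n %| m)%Z)
  /\
  (forall n1 n2 : int, n1 != 0 -> n2 != 0 ->
     ((forall f : {poly rat}, inPrincipal (cpoly n1) f <-> inPrincipal (cpoly n2) f)
      <-> (n1 = n2 \/ n1 = - n2))).
Proof.
split; [|split].
- move=> g n g_iv n_nz g_meet_Z.
  have [k k_nz Eg] : exists2 k : int, k != 0 & g = cpoly k.
    by apply: (unitary_generator _ _ g_iv n_nz); apply/g_meet_Z/dvdzz.
  subst g.
  have dvd_nk : (n %| k)%Z by apply/g_meet_Z; exact: inPrincipal_refl.
  have dvd_kn : (k %| n)%Z by apply/(inPrincipal_cpoly _ _ k_nz)/g_meet_Z/dvdzz.
  by move=> f; apply/inPrincipal_cpoly_sign/dvdz_anti.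
- by move=> n n_nz m; exact: inPrincipal_cpoly.
- move=> n1 n2 n1_nz n2_nz; split=> [same_ideal | sign f]; last exact: inPrincipal_cpoly_sign.
  apply: dvdz_anti.
  + by apply/(inPrincipal_cpoly _ _ n1_nz)/same_ideal; exact: inPrincipal_refl.
  + by apply/(inPrincipal_cpoly _ _ n2_nz)/same_ideal; exact: inPrincipal_refl.
Qed.
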